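(* Let $D\in\{D_1,D_2,\dots,D_8\}$. For every positive integer $v$ with $v\equiv 8\pmod{14}$, there exists a $D$-decomposition of $K^*_v$.
   Context: $K^*_v$ denotes the complete symmetric digraph of order $v$: it contains both arcs $(x,y)$ and $(y,x)$ for every pair of distinct vertices $x,y$. A $D$-decomposition of a digraph $K$ is a set of subdigraphs of $K$, each isomorphic to $D$, such that every arc of $K$ lies in exactly one of them. For distinct vertices $v_0,\dots,v_6$, the digraphs $D_i[v_0,v_1,\dots,v_6]$ ($i\in[1,8]$) all have vertex set $\{v_0,\dots,v_6\}$ and the following arc sets: $D_1$: $(v_1,v_0),(v_1,v_2),(v_2,v_3),(v_3,v_4),(v_4,v_5),(v_5,v_6),(v_6,v_0)$; $D_2$: $(v_1,v_0),(v_2,v_1),(v_2,v_3),(v_3,v_4),(v_4,v_5),(v_5,v_6),(v_6,v_0)$; $D_3$: $(v_1,v_0),(v_1,v_2),(v_3,v_2),(v_3,v_4),(v_4,v_5),(v_5,v_6),(v_6,v_0)$; $D_4$: $(v_1,v_0),(v_1,v_2),(v_2,v_3),(v_4,v_3),(v_4,v_5),(v_5,v_6),(v_6,v_0)$; $D_5$: $(v_1,v_0),(v_2,v_1),(v_3,v_2),(v_3,v_4),(v_4,v_5),(v_5,v_6),(v_6,v_0)$; $D_6$: $(v_1,v_0),(v_2,v_1),(v_2,v_3),(v_3,v_4),(v_5,v_4),(v_5,v_6),(v_6,v_0)$; $D_7$: $(v_1,v_0),(v_1,v_2),(v_3,v_2),(v_3,v_4),(v_4,v_5),(v_6,v_5),(v_6,v_0)$;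 $D_8$: $(v_1,v_0),(v_2,v_1),(v_2,v_3),(v_4,v_3),(v_4,v_5),(v_5,v_6),(v_6,v_0)$. $D_i$ also denotes the isomorphism type of $D_i[v_0,\dots,v_6]$. *)

From mathcomp Require Import all_boot.
Set Implicit Arguments. Unset Strict Implicit. Unset Printing Implicit Defensive.

(* Arc lists of the digraphs D_1..D_8 on vertices v_0..v_6, given by the
   indices (a,b) meaning the arc (v_a, v_b). *)
Definition Darcs (i : nat) : seq (nat * nat) :=
  match i with
  | 1 => [:: (1,0); (1,2); (2,3); (3,4); (4,5); (5,6); (6,0)]
  | 2 => [:: (1,0); (2,1); (2,3); (3,4); (4,5); (5,6); (6,0)]
  | 3 => [:: (1,0); (1,2); (3,2); (3,4); (4,5); (5,6); (6,0)]
  | 4 => [:: (1,0); (1,2); (2,3); (4,3); (4,5); (5,6); (6,0)]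
  | 5 => [:: (1,0); (2,1); (3,2); (3,4); (4,5); (5,6); (6,0)]
  | 6 => [:: (1,0); (2,1); (2,3); (3,4); (5,4); (5,6); (6,0)]
  | 7 => [:: (1,0); (1,2); (3,2); (3,4); (4,5); (6,5); (6,0)]
  | 8 => [:: (1,0); (2,1); (2,3); (4,3); (4,5); (5,6); (6,0)]
  | _ => [::]
  end.

(* K*_v has vertex set 'I_v and all arcs (x,y), x <> y.
   A copy D[t_0,...,t_6] of D (with arc list A) in K*_v is given by a
   7-tuple t of pairwise distinct vertices; its arc set is: *)
Definition copy_arcs (v : nat) (A : seq (nat * nat)) (t : 7.-tuple 'I_v)
  : seq ('I_v * 'I_v) :=
  [seq (tnth t (inord a.1), tnth t (inord a.2)) | a <- A].

Definition has_decomposition (A : seq (nat * nat)) (v : nat) : Prop :=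
  exists s : seq (7.-tuple 'I_v),
    (forall t, t \in s -> uniq t) /\
    (forall x y : 'I_v, x != y ->
        count (fun t => (x, y) \in copy_arcs A t) s = 1).

From mathcomp Require Import all_boot zify.
Set Implicit Arguments. Unset Strict Implicit. Unset Printing Implicit Defensive.

(* Write v = 2n and identify the vertices of K*_v with Z_n x {0,1} through
   (x, h) |-> x + h n, with Z_n acting by translation on the first coordinate.
   The mixed difference (h, h', y - x mod n) of an arc from (x, h) to (y, h') is
   invariant under translation, and any two arcs with the same mixed difference
   are translates of each other by a unique element of Z_n.  Hence, if the arcs
   of some base copies of D realise every mixed difference other than (h, h, 0)
   exactly once, the n translates of the base copies form a D-decomposition.
   For v = 14k + 8, i.e. n = 7k + 4, every D_i has such a base of 4k + 2
   copies: two starters and four families indexed by j < k, whose differences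
   form arithmetic progressions in j that tile each class of differences; the
   case v = 8 is checked by computation. *)

Lemma sumn_map_exchange (S T : Type) (F : S -> T -> nat) (s : seq S) (t : seq T) :
  sumn [seq sumn [seq F x y | y <- t] | x <- s] =
  sumn [seq sumn [seq F x y | x <- s] | y <- t].
Proof.
rewrite !sumnE !big_map.
under eq_bigr do rewrite sumnE big_map.
under [RHS]eq_bigr do rewrite sumnE big_map.
exact: exchange_big.
Qed.

Lemma sumn_map_flatten (T : Type) (F : T -> nat) (ss : seq (seq T)) :
  sumn [seq F t | t <- flatten ss] = sumn [seq sumn [seq F t | t <- s] | s <- ss].
Proof. by elim: ss => //= s ss IH; rewrite map_cat sumn_cat IH. Qed.

Lemma count_has_of_sum_count1 (T : Type) (P : pred T) (ss : seq (seq T)) :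
  sumn [seq count P s | s <- ss] = 1 -> count (has P) ss = 1.
Proof.
have count_has_le ss' : count (has P) ss' <= sumn [seq count P s | s <- ss'].
  by elim: ss' => //= s ss' IH; rewrite has_count; apply: leq_add => //; case: (count P s).
elim: ss => //= s ss IH; rewrite has_count.
case: (count P s) => [|[|//]] /= h; first by rewrite IH.
have h0 : sumn [seq count P s | s <- ss] = 0 by lia.
by move: (count_has_le ss); rewrite h0 leqn0 => /eqP ->.
Qed.

Lemma count_const_andb (T : Type) (b : bool) (P : pred T) (s : seq T) :
  count (fun x => b && P x) s = b * count P s.
Proof. by case: b; rewrite ?mul1n ?mul0n ?count_pred0. Qed.

(** * Mixed differences over Z_n x {0, 1} *)

Section CyclicDevelopment.

Variable n : nat.
Hypothesis n_gt0 : 0 < n.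

Definition point_ok (p : nat * nat) := (p.1 < n) && (p.2 <= 1).
Definition shift (z : nat) (p : nat * nat) := ((p.1 + z) %% n, p.2).
Definition mixed_diff (p q : nat * nat) := (p.2, q.2, (q.1 + n - p.1) %% n).

Lemma shift_ok z p : point_ok p -> point_ok (shift z p).
Proof. by case/andP=> _ hp; rewrite /point_ok ltn_pmod. Qed.

Lemma shift_inj z : {in point_ok &, injective (shift z)}.
Proof.
case=> [x h] [y h']; rewrite /point_ok /shift /= => /andP [hx _] /andP [hy _] [hxy ->].
by move/eqP: hxy; rewrite eqn_modDr !modn_small // => /eqP ->.
Qed.

Lemma addn_modn_diff x y : x < n -> y < n -> (x + (y + n - x) %% n) %% n = y.
Proof.
move=> hx hy; rewrite modnDmr (_ : x + (y + n - x) = y + n) ?modnDr ?modn_small //.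
lia.
Qed.

Lemma eq_shift z p q : z < n -> point_ok p -> point_ok q ->
  (shift z p == q) = (z == (q.1 + n - p.1) %% n) && (p.2 == q.2).
Proof.
case: p q => [x h] [y h'] hz; rewrite /point_ok /= => /andP [hx _] /andP [hy _].
rewrite /shift xpair_eqE /=; congr (_ && _).
by rewrite -{1}(addn_modn_diff hx hy) eqn_modDl modn_mod modn_small.
Qed.

Lemma modn_diff_transpose x y x' y' : x < n -> y < n -> x' < n -> y' < n ->
  ((y + n - x) %% n == (y' + n - x') %% n) = ((x' + n - x) %% n == (y' + n - y) %% n).
Proof.
move=> hx hy hx' hy'.
rewrite -(eqn_modDr (x + x')) -[in RHS](eqn_modDr (x + y)).
rewrite (_ : y + n - x + (x + x') = y + x' + n); last by lia.
rewrite (_ : y' + n - x' + (x + x') = y' + x + n); last by lia.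
rewrite (_ : x' + n - x + (x + y) = y + x' + n); last by lia.
by rewrite (_ : y' + n - y + (x + y) = y' + x + n); last by lia.
Qed.

Lemma count_shift_arc p q p' q' :
  point_ok p -> point_ok q -> point_ok p' -> point_ok q' ->
  count (fun z => (shift z p == p') && (shift z q == q')) (iota 0 n) =
  (mixed_diff p q == mixed_diff p' q').
Proof.
move=> hp hq hp' hq'.
set d := (p'.1 + n - p.1) %% n.
have hd : d < n by rewrite ltn_pmod.
transitivity (((p.2 == p'.2) && (shift d q == q')) * count (pred1 d) (iota 0 n)).
  rewrite -count_const_andb; apply: eq_in_count => z; rewrite mem_iota => /andP [_ hz].
  rewrite [RHS]andbC !eq_shift // -/d.
  by have [->|/negbTE zd] := eqVneq z d; rewrite /= ?eqxx ?zd.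
rewrite count_uniq_mem ?iota_uniq // mem_iota hd muln1 eq_shift // /mixed_diff !xpair_eqE.
case/andP: hp => hp _; case/andP: hq => hq _; case/andP: hp' => hp' _; case/andP: hq' => hq' _.
rewrite modn_diff_transpose //.
by case: (p.2 == p'.2); case: (q.2 == q'.2); rewrite ?andbF ?andbT.
Qed.

Lemma mixed_diff_gt0 p q : point_ok p -> point_ok q -> p != q -> p.2 = q.2 ->
  0 < (q.1 + n - p.1) %% n.
Proof.
case: p q => [x h] [y h'] /andP [/= hx _] /andP [/= hy _] pq /= hh.
rewrite lt0n; apply: contra pq => /eqP d0.
by rewrite hh xpair_eqE eqxx andbT -(addn_modn_diff hx hy) d0 addn0 modn_small.
Qed.

Definition vertex (p : nat * nat) := p.1 + p.2 * n.
Definition point_of (u : nat) := (u %% n, u %/ n).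

Lemma vertex_lt p : point_ok p -> vertex p < n + n.
Proof. by case: p => x h /andP [/= hx hh]; rewrite /vertex /=; nia. Qed.

Lemma point_of_ok u : u < n + n -> point_ok (point_of u).
Proof. by move=> hu; rewrite /point_ok /= ltn_pmod // -ltnS ltn_divLR //; lia. Qed.

Lemma point_ofK u : vertex (point_of u) = u.
Proof. by rewrite /vertex /= addnC -divn_eq. Qed.

Lemma vertexK p : point_ok p -> point_of (vertex p) = p.
Proof.
case: p => x h /andP [/= hx _]; rewrite /point_of /vertex /=.
by rewrite addnC modnMDl modn_small // divnMDl // divn_small ?addn0.
Qed.

Lemma eq_vertex p u : point_ok p -> (vertex p == u) = (p == point_of u).
Proof. by move=> hp; apply/eqP/eqP => [<-|->]; rewrite ?vertexK ?point_ofK. Qed.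

Definition blocks_ok (bl : seq (seq (nat * nat))) :=
  all (fun b => (size b == 7) && uniq b && all point_ok b) bl.

Variable A : seq (nat * nat).

Definition arcs_ok := all (fun a => (a.1 < 7) && (a.2 < 7)) A.

Definition block_arcs (b : seq (nat * nat)) :=
  [seq (nth (0, 0) b a.1, nth (0, 0) b a.2) | a <- A].
Definition block_diffs (b : seq (nat * nat)) := [seq mixed_diff pq.1 pq.2 | pq <- block_arcs b].
Definition base_diffs (bl : seq (seq (nat * nat))) := flatten [seq block_diffs b | b <- bl].

Definition mixed_diff_family (bl : seq (seq (nat * nat))) := forall h1 h2 e,
  h1 <= 1 -> h2 <= 1 -> e < n -> (h1 != h2) || (0 < e) ->
  count (pred1 (h1, h2, e)) (base_diffs bl) = 1.

Lemma count_shifted_block_arcs b p' q' :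
  all (fun a => (a.1 < size b) && (a.2 < size b)) A -> all point_ok b ->
  point_ok p' -> point_ok q' ->
  sumn [seq count (pred1 (p', q')) (block_arcs (map (shift z) b)) | z <- iota 0 n] =
  count (pred1 (mixed_diff p' q')) (block_diffs b).
Proof.
move=> /allP hA /allP hb hp' hq'.
have -> : [seq count (pred1 (p', q')) (block_arcs (map (shift z) b)) | z <- iota 0 n] =
    [seq sumn [seq nat_of_bool ((shift z (nth (0, 0) b a.1) == p') &&
                                (shift z (nth (0, 0) b a.2) == q')) | a <- A]
    | z <- iota 0 n].
  apply: eq_map => z; rewrite -sumn_count /block_arcs -map_comp; congr sumn.
  apply/eq_in_map => a /hA /andP [h1 h2] /=.
  by rewrite !(nth_map (0, 0)) // xpair_eqE.
rewrite sumn_map_exchange /block_diffs /block_arcs -map_comp -sumn_count -map_comp.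
congr sumn; apply/eq_in_map => a /hA /andP [h1 h2] /=.
by rewrite sumn_count count_shift_arc // hb // mem_nth.
Qed.

Definition block_copy (m : nat) (b : seq (nat * nat)) : 7.-tuple 'I_m.+1 :=
  [tuple inord (vertex (nth (0, 0) b i)) | i < 7].

Section BlockCopy.

Variables (m : nat) (b : seq (nat * nat)).
Hypotheses (m_eq : m.+1 = n + n) (size_b : size b = 7) (b_ok : all point_ok b).
Hypothesis A_ok : arcs_ok.

Lemma nth_block_ok i : i < 7 -> point_ok (nth (0, 0) b i).
Proof. by move=> hi; apply: (allP b_ok); rewrite mem_nth ?size_b. Qed.

Lemma inord_vertexK i : i < 7 ->
  (inord (vertex (nth (0, 0) b i)) : 'I_m.+1) = vertex (nth (0, 0) b i) :> nat.
Proof. by move=> hi; rewrite inordK // m_eq vertex_lt ?nth_block_ok. Qed.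

Lemma uniq_block_copy : uniq b -> uniq (block_copy m b).
Proof.
move=> ub; rewrite map_inj_uniq ?enum_uniq // => i j /(congr1 (@nat_of_ord _)).
rewrite !inord_vertexK // => /eqP; rewrite eq_vertex ?nth_block_ok // vertexK ?nth_block_ok //.
by rewrite nth_uniq ?size_b // => /eqP /val_inj.
Qed.

Lemma count_copy_arcs (x y : 'I_m.+1) :
  count (pred1 (x, y)) (copy_arcs A (block_copy m b)) =
  count (pred1 (point_of x, point_of y)) (block_arcs b).
Proof.
rewrite /copy_arcs /block_arcs !count_map; apply: eq_in_count => a /(allP A_ok) /andP [h1 h2] /=.
rewrite !tnth_mktuple !inordK // !xpair_eqE -!val_eqE /= !inord_vertexK //.
by rewrite !eq_vertex ?nth_block_ok.
Qed.

End BlockCopy.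

Theorem mixed_diff_family_decomposition bl :
  arcs_ok -> blocks_ok bl -> mixed_diff_family bl -> has_decomposition A (n + n).
Proof.
move=> A_ok bl_ok fam.
have shifted_ok b z : b \in bl -> [/\ size (map (shift z) b) = 7,
    uniq (map (shift z) b) & all point_ok (map (shift z) b)].
  move/(allP bl_ok) => /andP [/andP [/eqP sb ub] /allP okb]; rewrite size_map sb; split => //.
    by rewrite map_inj_in_uniq // => p q /okb hp /okb hq; apply: shift_inj.
  by apply/allP => _ /mapP [p /okb hp ->]; apply: shift_ok.
have m_eq : (n + n).-1.+1 = n + n by lia.
rewrite -m_eq; set m := (n + n).-1.
set copies := flatten [seq [seq block_copy m (map (shift z) b) | z <- iota 0 n] | b <- bl].
exists copies; split.
  move=> _ /flatten_mapP [b hb /mapP [z _ ->]].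
  by case: (shifted_ok b z hb) => sb ub okb; apply: uniq_block_copy.
move=> x y xy.
set p := point_of x; set q := point_of y.
have ok_p : point_ok p by apply: point_of_ok; rewrite -m_eq.
have ok_q : point_ok q by apply: point_of_ok; rewrite -m_eq.
transitivity (count (has (pred1 (x, y))) [seq copy_arcs A t | t <- copies]).
  by rewrite count_map; apply: eq_count => t /=; rewrite has_pred1.
apply: count_has_of_sum_count1; rewrite -map_comp sumn_map_flatten.
have translates_count b : b \in bl ->
    sumn [seq count (pred1 (x, y)) (copy_arcs A t)
         | t <- [seq block_copy m (map (shift z) b) | z <- iota 0 n]] =
    count (pred1 (mixed_diff p q)) (block_diffs b).
  move=> hb; case/(allP bl_ok)/andP: (hb) => /andP [/eqP sb _] okb.
  rewrite -map_comp -(count_shifted_block_arcs _ okb ok_p ok_q); last first.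
    by apply/allP => a /(allP A_ok); rewrite sb.
  congr sumn; apply/eq_in_map => z _ /=.
  by case: (shifted_ok b z hb) => sb' _ okb'; rewrite count_copy_arcs.
transitivity (count (pred1 (mixed_diff p q)) (base_diffs bl)).
  rewrite /base_diffs count_flatten -!map_comp; congr sumn.
  by apply/eq_in_map => b; apply: translates_count.
case/andP: (ok_p) => _ hp2; case/andP: (ok_q) => _ hq2.
apply: fam => //; first exact: ltn_pmod.
apply/orP; case: (p.2 =P q.2) => [same_half|/eqP]; [right | by left].
apply: mixed_diff_gt0 => //; apply: contra xy => /eqP pq.
by rewrite -val_eqE /= -(point_ofK x) -(point_ofK y) -/p -/q pq.
Qed.

End CyclicDevelopment.

(** * Counting differences in arithmetic progressions *)

Lemma map_rev_iota0 (T : Type) (f : nat -> T) (k : nat) :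
  [seq f (k.-1 - j) | j <- iota 0 k] = rev [seq f j | j <- iota 0 k].
Proof.
apply: (@eq_from_nth _ (f 0)); first by rewrite size_rev !size_map.
rewrite size_map size_iota => i ik.
rewrite nth_rev ?size_map ?size_iota // !(nth_map 0) ?size_iota ?nth_iota; try lia.
by congr f; lia.
Qed.

Lemma map_addn_iota0 (c k : nat) : [seq c + j | j <- iota 0 k] = iota c k.
Proof. by rewrite -iotaDl addn0. Qed.

Lemma map_addn_rev_iota0 (c k : nat) : [seq c + (k.-1 - j) | j <- iota 0 k] = rev (iota c k).
Proof. by rewrite (map_rev_iota0 (addn c)) map_addn_iota0. Qed.

Lemma map_addn2_rev_iota0 (c k : nat) :
  [seq c + 2 * (k.-1 - j) | j <- iota 0 k] = rev [seq c + 2 * j | j <- iota 0 k].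
Proof. exact: (map_rev_iota0 (fun j => c + 2 * j)). Qed.

Lemma count_parity_iota (P : pred nat) (a b k : nat) : b = a.+1 ->
  count P [seq a + 2 * j | j <- iota 0 k] + count P [seq b + 2 * j | j <- iota 0 k] =
  count P (iota a (2 * k)).
Proof.
move=> ->; elim: k => // k IH.
rewrite -[k.+1]addn1 iotaD !map_cat !count_cat addnACA IH mulnDr iotaD count_cat /=.
by rewrite add0n !addn0 addSn.
Qed.

Lemma count_flatten_map_cons (S T : Type) (P : pred T) (x : S -> T) (L : S -> seq T)
    (s : seq S) :
  count P (flatten [seq x j :: L j | j <- s]) =
  count P [seq x j | j <- s] + count P (flatten [seq L j | j <- s]).
Proof. by elim: s => //= j s IH; rewrite count_cat IH count_cat; lia. Qed.

Lemma flatten_map_nil (S T : Type) (s : seq S) : flatten [seq [::] : seq T | _ <- s] = [::].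
Proof. by elim: s. Qed.

Lemma count_triple_map (S : Type) (h1 h2 e a b : nat) (f : S -> nat) (s : seq S) :
  count (pred1 (h1, h2, e)) [seq (a, b, f j) | j <- s] =
  ((a, b) == (h1, h2)) * count (pred1 e) [seq f j | j <- s].
Proof. by rewrite !count_map -count_const_andb. Qed.

Fixpoint consecutive (lo : nat) (ps : seq (nat * nat)) : bool :=
  if ps is p :: ps' then (p.1 == lo) && consecutive (lo + p.2) ps' else true.

Lemma flatten_consecutive_iota lo ps : consecutive lo ps ->
  flatten [seq iota p.1 p.2 | p <- ps] = iota lo (sumn [seq p.2 | p <- ps]).
Proof.
elim: ps lo => //= [[a l] ps IH] lo /andP [/eqP /= -> cps].
by rewrite iotaD (IH _ cps).
Qed.

Lemma count_consecutive_iota e lo ps : consecutive lo ps ->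
  lo <= e < lo + sumn [seq p.2 | p <- ps] ->
  sumn [seq count (pred1 e) (iota p.1 p.2) | p <- ps] = 1.
Proof.
move=> cps he; rewrite (_ : sumn _ = count (pred1 e) (flatten [seq iota p.1 p.2 | p <- ps])).
  by rewrite (flatten_consecutive_iota cps) count_uniq_mem ?iota_uniq // mem_iota he.
by rewrite count_flatten -map_comp.
Qed.

Lemma modn_diff_eq n x y e : x < n -> y < n -> e < n -> (y + n = e + x) \/ (y = e + x) ->
  (y + n - x) %% n = e.
Proof.
move=> hx hy he [h|h].
  by rewrite (_ : y + n - x = e) ?modn_small //; lia.
by rewrite (_ : y + n - x = e + n) ?modnDr ?modn_small //; lia.
Qed.

Lemma base_diffs_cat n A S T : base_diffs n A (S ++ T) = base_diffs n A S ++ base_diffs n A T.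
Proof. by rewrite /base_diffs map_cat flatten_cat. Qed.

Lemma base_diffs_families n A S (F : nat -> seq (seq (nat * nat))) G k :
  (forall j, j < k -> base_diffs n A (F j) = G j) ->
  base_diffs n A (S ++ flatten [seq F j | j <- iota 0 k]) =
  base_diffs n A S ++ flatten [seq G j | j <- iota 0 k].
Proof.
move=> FG; rewrite base_diffs_cat; congr (_ ++ _).
rewrite (_ : [seq G j | j <- iota 0 k] = [seq base_diffs n A (F j) | j <- iota 0 k]); last first.
  by apply/eq_in_map => j; rewrite mem_iota => /andP [_ /FG].
by elim: (iota 0 k) => //= j s IH; rewrite base_diffs_cat IH.
Qed.

Lemma blocks_ok_families n S (F : nat -> seq (seq (nat * nat))) k :
  blocks_ok n S -> (forall j, j < k -> blocks_ok n (F j)) ->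
  blocks_ok n (S ++ flatten [seq F j | j <- iota 0 k]).
Proof.
move=> okS okF; rewrite /blocks_ok all_cat; apply/andP; split => //.
by apply/allP => b /flatten_mapP [j]; rewrite mem_iota => /andP [_ /okF /allP]; apply.
Qed.

Lemma mixed_diff_family_of_check n A bl :
  all (fun h1 => all (fun h2 => all (fun e => (h1 == h2) && (e == 0) ||
     (count (pred1 (h1, h2, e)) (base_diffs n A bl) == 1)) (iota 0 n)) (iota 0 2)) (iota 0 2) ->
  mixed_diff_family n A bl.
Proof.
move=> /allP check h1 h2 e h1_le1 h2_le1 e_lt pure.
move: check => /(_ h1); rewrite mem_iota => /(_ h1_le1) /allP /(_ h2).
rewrite mem_iota => /(_ h2_le1) /allP /(_ e); rewrite mem_iota => /(_ e_lt) /orP [|/eqP //].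
by case/andP=> /eqP h12 /eqP e0; move: pure; rewrite h12 e0 eqxx.
Qed.

Lemma decomposition_of_mixed_diff_families A (small : seq (seq (nat * nat)))
    (big : nat -> seq (seq (nat * nat))) v :
  arcs_ok A ->
  (forall k, 0 < k -> blocks_ok (7 * k + 4) (big k)) ->
  (forall k, 0 < k -> mixed_diff_family (7 * k + 4) A (big k)) ->
  blocks_ok 4 small -> mixed_diff_family 4 A small ->
  v = 8 %[mod 14] -> has_decomposition A v.
Proof.
move=> A_ok big_ok big_fam small_ok small_fam v_mod.
have [k ->] : exists k, v = (7 * k + 4) + (7 * k + 4) by exists (v %/ 14); lia.
case: k => [|k]; first exact: (@mixed_diff_family_decomposition _ _ _ small).
apply: (@mixed_diff_family_decomposition _ _ _ (big k.+1)) => //.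
  exact: big_ok.
exact: big_fam.
Qed.

Ltac diff_table :=
  rewrite /base_diffs /block_diffs /block_arcs /mixed_diff /=;
  repeat (apply: (congr2 cons); first by congr (_, _); apply: modn_diff_eq; lia).

Ltac blocks_ok_by_lia :=
  rewrite /blocks_ok /point_ok /= !inE ?xpair_eqE !negb_or; repeat (apply/andP; split); lia.

(* Differences that decrease with j are written [c + (k.-1 - j)], so that they run through
   [iota c k] backwards. *)
Ltac expand_diff_counts base starters family :=
  move=> [|[|?]] [|[|?]] e // _ _ e_lt e_pure; unfold base;
  rewrite (base_diffs_families _ family) starters count_cat !count_flatten_map_cons
    flatten_map_nil !count_triple_map ?map_addn_iota0 ?map_addn_rev_iota0 ?map_addn2_rev_iota0
    ?count_rev /= ?mul0n ?mul1n !xpair_eqE /=.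

Ltac add_parity_merges e k ms :=
  lazymatch ms with
  | (?a, ?b) :: ?ms' =>
      have := @count_parity_iota (pred1 e) a b k ltac:(lia); add_parity_merges e k ms'
  | [::] => idtac
  end.

(* [tile lo ps merging ms]: the differences of the current class fill [lo, 7k + 4) with
   the consecutive intervals [(start, length)] of [ps]; each pair [(a, a + 1)] of [ms] names
   two step-2 progressions that together fill [iota a (2 * k)]. *)
Ltac tile_with lo ps ms :=
  match goal with
  | _ : is_true (?e < 7 * ?k + 4) |- _ =>
      have := @count_consecutive_iota e lo ps ltac:(by rewrite /=; lia) ltac:(by rewrite /=; lia);
      add_parity_merges e k ms; rewrite /=; intros; lia
  end.

Tactic Notation "tile" constr(lo) constr(ps) := tile_with lo ps (@nil (nat * nat)).
Tactic Notation "tile" constr(lo) constr(ps) "merging" constr(ms) := tile_with lo ps ms.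

(** * Base blocks for D_1, ..., D_8 *)

Section D1.

Variable k : nat.
Hypothesis k_gt0 : 0 < k.

Definition D1_starters : seq (seq (nat * nat)) :=
  [:: [:: (0, 0); (1, 0); (3 * k + 1, 1); (4 * k + 3, 0); (k + 1, 0); (5 * k + 4, 1);
          (3 * k + 3, 0)];
      [:: (3 * k + 1, 1); (5 * k + 2, 1); (k, 1); (2 * k + 1, 0); (6 * k + 3, 1); (0, 1);
          (0, 0)]].

Definition D1_family (j : nat) : seq (seq (nat * nat)) :=
  [:: [:: (k + 2 * j, 1); (0, 0); (j, 1); (5 * k + 2, 1); (j + 1, 0); (k + 2 * j + 2, 0);
          (4 * k + 3 * j + 3, 0)];
      [:: (3 * k + j + 1, 0); (2 * k + 2 * j + 1, 0); (5 * k, 1); (7 * k + 1 - j, 1);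
          (k, 0); (k - j - 1, 1); (4 * k + 2, 0)];
      [:: (k + 1, 0); (k - j, 1); (0, 0); (4 * k + 2 * j + 4, 1); (4 * k + j + 3, 1);
          (k + 1, 1); (4 * k + 2 - j, 1)];
      [:: (k, 1); (j, 1); (6 * k + 3, 0); (5 * k + 1 - j, 0); (3 * k - 2 * j - 1, 0);
          (5 * k - j, 0); (2 * k + j + 1, 1)]].

Definition D1_base := D1_starters ++ flatten [seq D1_family j | j <- iota 0 k].

Lemma D1_starters_diffs :
  base_diffs (7 * k + 4) (Darcs 1) D1_starters =
  [:: (0, 0, 7 * k + 3); (0, 1, 3 * k); (1, 0, k + 2); (0, 0, 4 * k + 2);
      (0, 1, 4 * k + 3); (1, 0, 5 * k + 3); (0, 0, 4 * k + 1); (1, 1, 5 * k + 3);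
      (1, 1, 3 * k + 2); (1, 0, k + 1); (0, 1, 4 * k + 2); (1, 1, k + 1); (1, 0, 0);
      (0, 1, 3 * k + 1)].
Proof. by diff_table. Qed.

Lemma D1_family_diffs j : j < k ->
  base_diffs (7 * k + 4) (Darcs 1) (D1_family j) =
  [:: (0, 1, k + 2 * j); (0, 1, 0 + j); (1, 1, 4 * k + 3 + (k.-1 - j));
      (1, 0, 2 * k + 3 + j); (0, 0, k + 1 + j); (0, 0, 3 * k + 1 + j);
      (0, 1, 3 * k + 2 + (k.-1 - j)); (0, 0, 1 + (k.-1 - j));
      (0, 1, k + 1 + 2 * (k.-1 - j)); (1, 1, k + 2 + (k.-1 - j)); (1, 0, k + 3 + j);
      (0, 1, 6 * k + 4 + (k.-1 - j)); (1, 0, 3 * k + 3 + j); (0, 0, 6 * k + 3 + j);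
      (1, 0, 1 + j); (1, 0, 6 * k + 4 + j); (0, 1, 4 * k + 4 + 2 * j);
      (1, 1, 6 * k + 4 + (k.-1 - j)); (1, 1, 3 * k + 3 + (k.-1 - j));
      (1, 1, 2 * k + 2 + (k.-1 - j)); (1, 0, 4 * k + 3 + j); (1, 1, 1 + (k.-1 - j));
      (1, 0, 5 * k + 4 + (k.-1 - j)); (0, 0, 5 * k + 3 + (k.-1 - j));
      (0, 0, 4 * k + 3 + (k.-1 - j)); (0, 0, 2 * k + 1 + j); (0, 1, 4 * k + 5 + 2 * j);
      (1, 1, 5 * k + 4 + (k.-1 - j))].
Proof. by move=> ?; diff_table. Qed.

Lemma D1_base_ok : blocks_ok (7 * k + 4) D1_base.
Proof.
by apply: blocks_ok_families => [|j ?]; blocks_ok_by_lia.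
Qed.

Lemma D1_mixed_diff_family : mixed_diff_family (7 * k + 4) (Darcs 1) D1_base.
Proof.
expand_diff_counts D1_base D1_starters_diffs D1_family_diffs.
- tile 1
    [:: (1, k); (k + 1, k); (2 * k + 1, k); (3 * k + 1, k); (4 * k + 1, 1); (4 * k + 2, 1);
        (4 * k + 3, k); (5 * k + 3, k); (6 * k + 3, k); (7 * k + 3, 1)].
- tile 0
    [:: (0, k); (k, 2 * k); (3 * k, 1); (3 * k + 1, 1); (3 * k + 2, k); (4 * k + 2, 1);
        (4 * k + 3, 1); (4 * k + 4, 2 * k); (6 * k + 4, k)]
    merging [:: (k, k + 1); (4 * k + 4, 4 * k + 5)].
- tile 0
    [:: (0, 1); (1, k); (k + 1, 1); (k + 2, 1); (k + 3, k); (2 * k + 3, k); (3 * k + 3, k);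
        (4 * k + 3, k); (5 * k + 3, 1); (5 * k + 4, k); (6 * k + 4, k)].
- tile 1
    [:: (1, k); (k + 1, 1); (k + 2, k); (2 * k + 2, k); (3 * k + 2, 1); (3 * k + 3, k);
        (4 * k + 3, k); (5 * k + 3, 1); (5 * k + 4, k); (6 * k + 4, k)].
Qed.

End D1.

Definition D1_base_v8 : seq (seq (nat * nat)) :=
  [:: [:: (0, 0); (1, 0); (2, 0); (0, 1); (3, 0); (2, 1); (3, 1)];
      [:: (0, 1); (1, 1); (3, 1); (1, 0); (2, 1); (2, 0); (0, 0)]].

Lemma D1_decomposition v : v = 8 %[mod 14] -> has_decomposition (Darcs 1) v.
Proof.
apply: (decomposition_of_mixed_diff_families (small := D1_base_v8) _
  D1_base_ok D1_mixed_diff_family) => //.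
exact: mixed_diff_family_of_check.
Qed.

Section D2.

Variable k : nat.
Hypothesis k_gt0 : 0 < k.

Definition D2_starters : seq (seq (nat * nat)) :=
  [:: [:: (2 * k + 2, 1); (3 * k + 4, 0); (1, 0); (2 * k + 1, 1); (3 * k + 2, 0);
          (6 * k + 3, 1); (0, 1)];
      [:: (k + 2, 0); (k + 1, 0); (k + 1, 1); (0, 1); (5 * k + 3, 0); (4 * k + 2, 1);
          (k, 0)]].

Definition D2_family (j : nat) : seq (seq (nat * nat)) :=
  [:: [:: (2 * k - 2 * j, 0); (4 * k + 2, 0); (3 * k + j, 0); (6 * k + 2, 0); (k - j, 0);
          (0, 1); (2 * k + 1 - j, 1)];
      [:: (k - 1, 1); (j, 0); (3 * k + 1, 1); (6 * k + j + 3, 0); (4 * k + 2 - j, 0);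
          (6 * k + 1 - 2 * j, 1); (3 * k - j, 1)];
      [:: (5 * k + 2 * j + 2, 1); (j, 0); (2 * k, 1); (2 * k - j - 1, 1);
          (5 * k - 2 * j, 0); (3 * k - j, 0); (2 * k, 0)];
      [:: (4 * k + 3, 1); (k - j, 1); (0, 1); (k + j + 2, 0); (6 * k + 3 - j, 1);
          (k + 2, 1); (k + j + 3, 0)]].

Definition D2_base := D2_starters ++ flatten [seq D2_family j | j <- iota 0 k].

Lemma D2_starters_diffs :
  base_diffs (7 * k + 4) (Darcs 2) D2_starters =
  [:: (0, 1, 6 * k + 2); (0, 0, 3 * k + 3); (0, 1, 2 * k); (1, 0, k + 1);
      (0, 1, 3 * k + 1); (1, 1, k + 1); (1, 1, 2 * k + 2); (0, 0, 1); (1, 0, 0);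
      (1, 1, 6 * k + 3); (1, 0, 5 * k + 3); (0, 1, 6 * k + 3); (1, 0, 4 * k + 2); (0, 0, 2)].
Proof. by diff_table. Qed.

Lemma D2_family_diffs j : j < k ->
  base_diffs (7 * k + 4) (Darcs 2) (D2_family j) =
  [:: (0, 0, 3 * k + 4 + 2 * (k.-1 - j)); (0, 0, 3 + (k.-1 - j));
      (0, 0, 2 * k + 3 + (k.-1 - j)); (0, 0, k + 3 + (k.-1 - j)); (0, 1, 6 * k + 4 + j);
      (1, 1, k + 2 + (k.-1 - j)); (1, 0, 6 * k + 4 + (k.-1 - j)); (0, 1, 0 + (k.-1 - j));
      (1, 0, 4 * k + 3 + j); (1, 0, 3 * k + 2 + j); (0, 0, 3 * k + 5 + 2 * (k.-1 - j));
      (0, 1, k + (k.-1 - j)); (1, 1, 4 * k + 3 + j); (1, 1, 5 * k + 3 + j);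
      (0, 1, 5 * k + 2 + j); (1, 0, 5 * k + 4 + j); (1, 1, 6 * k + 4 + (k.-1 - j));
      (1, 0, 2 * k + 2 + (k.-1 - j)); (0, 0, 5 * k + 4 + j); (0, 0, 6 * k + 4 + j);
      (0, 1, 3 * k + 2 + 2 * j); (1, 1, 3 * k + 3 + j); (1, 1, 1 + (k.-1 - j));
      (1, 0, k + 2 + j); (0, 1, 3 * k + 3 + 2 * (k.-1 - j)); (1, 1, 2 * k + 3 + j);
      (1, 0, 1 + j); (0, 1, 2 * k + 1 + (k.-1 - j))].
Proof. by move=> ?; diff_table. Qed.

Lemma D2_base_ok : blocks_ok (7 * k + 4) D2_base.
Proof.
by apply: blocks_ok_families => [|j ?]; blocks_ok_by_lia.
Qed.

Lemma D2_mixed_diff_family : mixed_diff_family (7 * k + 4) (Darcs 2) D2_base.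
Proof.
expand_diff_counts D2_base D2_starters_diffs D2_family_diffs.
- tile 1
    [:: (1, 1); (2, 1); (3, k); (k + 3, k); (2 * k + 3, k); (3 * k + 3, 1);
        (3 * k + 4, 2 * k); (5 * k + 4, k); (6 * k + 4, k)]
    merging [:: (3 * k + 4, 3 * k + 5)].
- tile 0
    [:: (0, k); (k, k); (2 * k, 1); (2 * k + 1, k); (3 * k + 1, 1); (3 * k + 2, 2 * k);
        (5 * k + 2, k); (6 * k + 2, 1); (6 * k + 3, 1); (6 * k + 4, k)]
    merging [:: (3 * k + 2, 3 * k + 3)].
- tile 0
    [:: (0, 1); (1, k); (k + 1, 1); (k + 2, k); (2 * k + 2, k); (3 * k + 2, k);
        (4 * k + 2, 1); (4 * k + 3, k); (5 * k + 3, 1); (5 * k + 4, k); (6 * k + 4, k)].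
- tile 1
    [:: (1, k); (k + 1, 1); (k + 2, k); (2 * k + 2, 1); (2 * k + 3, k); (3 * k + 3, k);
        (4 * k + 3, k); (5 * k + 3, k); (6 * k + 3, 1); (6 * k + 4, k)].
Qed.

End D2.

Definition D2_base_v8 : seq (seq (nat * nat)) :=
  [:: [:: (0, 0); (1, 0); (3, 0); (0, 1); (2, 0); (2, 1); (1, 1)];
      [:: (0, 0); (0, 1); (1, 0); (3, 1); (1, 1); (2, 1); (3, 0)]].

Lemma D2_decomposition v : v = 8 %[mod 14] -> has_decomposition (Darcs 2) v.
Proof.
apply: (decomposition_of_mixed_diff_families (small := D2_base_v8) _
  D2_base_ok D2_mixed_diff_family) => //.
exact: mixed_diff_family_of_check.
Qed.

Section D3.

Variable k : nat.
Hypothesis k_gt0 : 0 < k.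

Definition D3_starters : seq (seq (nat * nat)) :=
  [:: [:: (3 * k + 2, 0); (0, 0); (3 * k + 3, 0); (2, 1); (1, 0); (k + 2, 0);
          (2 * k + 2, 1)];
      [:: (2, 1); (2 * k + 4, 0); (1, 1); (0, 1); (2 * k + 2, 1); (4 * k + 5, 1);
          (k + 3, 0)]].

Definition D3_family (j : nat) : seq (seq (nat * nat)) :=
  [:: [:: (2 * j, 0); (5 * k + j + 3, 1); (0, 1); (6 * k + 3 - 2 * j, 0); (2 * k - j, 1);
          (k, 1); (k + j, 0)];
      [:: (k + 1, 1); (6 * k + 1 - j, 1); (7 * k + 2, 0); (j, 1); (4 * k + 1, 0);
          (k - j, 0); (2 * k + j + 2, 1)];
      [:: (2 * k - j, 0); (k, 0); (5 * k + j + 4, 0); (0, 0); (3 * k + 1 - j, 0);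
          (4 * k + 3, 0); (3 * k + j + 3, 1)];
      [:: (4 * k + j + 1, 1); (7 * k + 1, 1); (3 * k + j + 1, 1); (3 * k + 1, 0);
          (2 * k - j - 1, 1); (3 * k - 2 * j, 1); (0, 0)]].

Definition D3_base := D3_starters ++ flatten [seq D3_family j | j <- iota 0 k].

Lemma D3_starters_diffs :
  base_diffs (7 * k + 4) (Darcs 3) D3_starters =
  [:: (0, 0, 3 * k + 2); (0, 0, 3 * k + 3); (1, 0, 3 * k + 1); (1, 0, 7 * k + 3);
      (0, 0, k + 1); (0, 1, k); (1, 0, k); (0, 1, 5 * k + 2); (0, 1, 5 * k + 1); (1, 1, 1);
      (1, 1, 2 * k + 2); (1, 1, 2 * k + 3); (1, 0, 4 * k + 2); (0, 1, 6 * k + 3)].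
Proof. by diff_table. Qed.

Lemma D3_family_diffs j : j < k ->
  base_diffs (7 * k + 4) (Darcs 3) (D3_family j) =
  [:: (1, 0, 2 * k + 1 + j); (1, 1, k + 2 + (k.-1 - j)); (0, 1, k + 1 + 2 * j);
      (0, 1, 3 * k + 1 + j); (1, 1, 6 * k + 4 + j); (1, 0, 0 + j); (0, 0, 6 * k + 4 + j);
      (1, 1, 2 * k + 4 + j); (1, 0, k + 1 + j); (1, 0, 6 * k + 3 + (k.-1 - j));
      (1, 0, 3 * k + 2 + (k.-1 - j)); (0, 0, 3 * k + 4 + (k.-1 - j));
      (0, 1, k + 2 + 2 * j); (1, 1, 5 * k + 4 + (k.-1 - j)); (0, 0, 1 + (k.-1 - j));
      (0, 0, 4 * k + 4 + j); (0, 0, 5 * k + 4 + j); (0, 0, 2 * k + 2 + (k.-1 - j));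
      (0, 0, k + 2 + j); (0, 1, 6 * k + 4 + j); (1, 0, 4 * k + 3 + 2 * (k.-1 - j));
      (1, 1, 4 * k + 4 + j); (1, 1, 3 * k + 4 + j); (0, 1, 0 + j);
      (0, 1, 5 * k + 3 + (k.-1 - j)); (1, 1, 2 + (k.-1 - j)); (1, 0, 4 * k + 4 + 2 * j);
      (0, 1, 4 * k + 1 + j)].
Proof. by move=> ?; diff_table. Qed.

Lemma D3_base_ok : blocks_ok (7 * k + 4) D3_base.
Proof.
by apply: blocks_ok_families => [|j ?]; blocks_ok_by_lia.
Qed.

Lemma D3_mixed_diff_family : mixed_diff_family (7 * k + 4) (Darcs 3) D3_base.
Proof.
expand_diff_counts D3_base D3_starters_diffs D3_family_diffs.
- tile 1
    [:: (1, k); (k + 1, 1); (k + 2, k); (2 * k + 2, k); (3 * k + 2, 1); (3 * k + 3, 1);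
        (3 * k + 4, k); (4 * k + 4, k); (5 * k + 4, k); (6 * k + 4, k)].
- tile 0
    [:: (0, k); (k, 1); (k + 1, 2 * k); (3 * k + 1, k); (4 * k + 1, k); (5 * k + 1, 1);
        (5 * k + 2, 1); (5 * k + 3, k); (6 * k + 3, 1); (6 * k + 4, k)]
    merging [:: (k + 1, k + 2)].
- tile 0
    [:: (0, k); (k, 1); (k + 1, k); (2 * k + 1, k); (3 * k + 1, 1); (3 * k + 2, k);
        (4 * k + 2, 1); (4 * k + 3, 2 * k); (6 * k + 3, k); (7 * k + 3, 1)]
    merging [:: (4 * k + 3, 4 * k + 4)].
- tile 1
    [:: (1, 1); (2, k); (k + 2, k); (2 * k + 2, 1); (2 * k + 3, 1); (2 * k + 4, k);
        (3 * k + 4, k); (4 * k + 4, k); (5 * k + 4, k); (6 * k + 4, k)].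
Qed.

End D3.

Definition D3_base_v8 : seq (seq (nat * nat)) :=
  [:: [:: (0, 0); (1, 0); (2, 0); (0, 1); (3, 0); (1, 1); (3, 1)];
      [:: (0, 1); (0, 0); (1, 1); (2, 1); (3, 1); (3, 0); (1, 0)]].

Lemma D3_decomposition v : v = 8 %[mod 14] -> has_decomposition (Darcs 3) v.
Proof.
apply: (decomposition_of_mixed_diff_families (small := D3_base_v8) _
  D3_base_ok D3_mixed_diff_family) => //.
exact: mixed_diff_family_of_check.
Qed.

Section D4.

Variable k : nat.
Hypothesis k_gt0 : 0 < k.

Definition D4_starters : seq (seq (nat * nat)) :=
  [:: [:: (2 * k + 1, 1); (0, 0); (6 * k + 3, 0); (k, 0); (5 * k + 2, 0); (k, 1);
          (2 * k + 2, 0)];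
      [:: (1, 0); (1, 1); (0, 1); (4 * k + 2, 1); (3 * k + 1, 1); (3 * k + 2, 0);
          (5 * k + 2, 1)]].

Definition D4_family (j : nat) : seq (seq (nat * nat)) :=
  [:: [:: (k + j, 1); (k + 2 * j + 2, 1); (3 * k + j + 3, 1); (0, 1); (5 * k + 2 - j, 1);
          (4 * k + 2, 0); (k - j, 0)];
      [:: (k, 0); (4 * k + j + 1, 1); (0, 0); (2 * j + 1, 1); (4 * k + j + 2, 0);
          (k + 2 * j + 1, 1); (2 * k + j + 1, 1)];
      [:: (1, 0); (2 * k + j + 2, 1); (k - j - 1, 1); (k + 1, 0); (k + j + 2, 0); (k, 1);
          (2 * k + j + 3, 0)];
      [:: (k, 1); (3 * k + 1 - j, 0); (3 * k + 2, 0); (4 * k + j + 3, 0); (2 * k + 1, 0);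
          (j, 0); (2 * k + 2 * j + 2, 1)]].

Definition D4_base := D4_starters ++ flatten [seq D4_family j | j <- iota 0 k].

Lemma D4_starters_diffs :
  base_diffs (7 * k + 4) (Darcs 4) D4_starters =
  [:: (0, 1, 2 * k + 1); (0, 0, 6 * k + 3); (0, 0, 2 * k + 1); (0, 0, 3 * k + 2);
      (0, 1, 3 * k + 2); (1, 0, k + 2); (0, 1, 7 * k + 3); (1, 0, 0); (1, 1, 7 * k + 3);
      (1, 1, 4 * k + 2); (1, 1, k + 1); (1, 0, 1); (0, 1, 2 * k); (1, 0, 2 * k + 3)].
Proof. by diff_table. Qed.

Lemma D4_family_diffs j : j < k ->
  base_diffs (7 * k + 4) (Darcs 4) (D4_family j) =
  [:: (1, 1, 6 * k + 3 + (k.-1 - j)); (1, 1, k + 2 + (k.-1 - j));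
      (1, 1, 3 * k + 2 + (k.-1 - j)); (1, 1, 2 * k + 2 + j); (1, 0, 6 * k + 4 + j);
      (0, 0, 3 * k + 3 + (k.-1 - j)); (0, 1, 0 + 2 * j); (1, 0, 3 * k + 4 + (k.-1 - j));
      (1, 0, 2 * k + 4 + (k.-1 - j)); (0, 1, 1 + 2 * j); (0, 1, 3 * k + 3 + j);
      (0, 1, 4 * k + 3 + j); (1, 1, 1 + (k.-1 - j)); (1, 0, 5 * k + 4 + (k.-1 - j));
      (1, 0, 4 * k + 4 + (k.-1 - j)); (1, 1, 4 * k + 3 + 2 * (k.-1 - j)); (1, 0, 2 + j);
      (0, 0, 6 * k + 4 + (k.-1 - j)); (0, 1, 6 * k + 3 + (k.-1 - j)); (1, 0, k + 3 + j);
      (0, 0, 4 * k + 3 + (k.-1 - j)); (0, 1, 5 * k + 3 + j); (0, 0, 1 + j);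
      (0, 0, k + 1 + j); (0, 0, 2 * k + 2 + j); (0, 0, 5 * k + 3 + j);
      (0, 1, 2 * k + 2 + j); (1, 1, 4 * k + 4 + 2 * (k.-1 - j))].
Proof. by move=> ?; diff_table. Qed.

Lemma D4_base_ok : blocks_ok (7 * k + 4) D4_base.
Proof.
by apply: blocks_ok_families => [|j ?]; blocks_ok_by_lia.
Qed.

Lemma D4_mixed_diff_family : mixed_diff_family (7 * k + 4) (Darcs 4) D4_base.
Proof.
expand_diff_counts D4_base D4_starters_diffs D4_family_diffs.
- tile 1
    [:: (1, k); (k + 1, k); (2 * k + 1, 1); (2 * k + 2, k); (3 * k + 2, 1); (3 * k + 3, k);
        (4 * k + 3, k); (5 * k + 3, k); (6 * k + 3, 1); (6 * k + 4, k)].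
- tile 0
    [:: (0, 2 * k); (2 * k, 1); (2 * k + 1, 1); (2 * k + 2, k); (3 * k + 2, 1);
        (3 * k + 3, k); (4 * k + 3, k); (5 * k + 3, k); (6 * k + 3, k); (7 * k + 3, 1)]
    merging [:: (0, 1)].
- tile 0
    [:: (0, 1); (1, 1); (2, k); (k + 2, 1); (k + 3, k); (2 * k + 3, 1); (2 * k + 4, k);
        (3 * k + 4, k); (4 * k + 4, k); (5 * k + 4, k); (6 * k + 4, k)].
- tile 1
    [:: (1, k); (k + 1, 1); (k + 2, k); (2 * k + 2, k); (3 * k + 2, k); (4 * k + 2, 1);
        (4 * k + 3, 2 * k); (6 * k + 3, k); (7 * k + 3, 1)]
    merging [:: (4 * k + 3, 4 * k + 4)].
Qed.

End D4.

Definition D4_base_v8 : seq (seq (nat * nat)) :=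
  [:: [:: (0, 0); (1, 0); (2, 0); (0, 1); (3, 0); (2, 1); (1, 1)];
      [:: (0, 0); (2, 0); (2, 1); (3, 0); (1, 1); (3, 1); (0, 1)]].

Lemma D4_decomposition v : v = 8 %[mod 14] -> has_decomposition (Darcs 4) v.
Proof.
apply: (decomposition_of_mixed_diff_families (small := D4_base_v8) _
  D4_base_ok D4_mixed_diff_family) => //.
exact: mixed_diff_family_of_check.
Qed.

Section D5.

Variable k : nat.
Hypothesis k_gt0 : 0 < k.

Definition D5_starters : seq (seq (nat * nat)) :=
  [:: [:: (6 * k + 2, 1); (2 * k + 1, 0); (3 * k + 2, 0); (2 * k + 2, 1); (3 * k + 4, 0);
          (1, 0); (0, 1)];
      [:: (5 * k + 2, 0); (4 * k + 1, 1); (0, 1); (2 * k + 2, 0); (2 * k + 2, 1);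
          (k + 1, 1); (0, 0)]].

Definition D5_family (j : nat) : seq (seq (nat * nat)) :=
  [:: [:: (j + 1, 0); (0, 0); (k - j, 1); (2 * k + j + 4, 1); (3 * k + 3, 0);
          (4 * k + j + 4, 1); (k + 2 * j + 3, 0)];
      [:: (7 * k + 1 - 2 * j, 1); (5 * k + 1 - j, 1); (6 * k + 3, 0); (k + j + 2, 0);
          (k + 1, 0); (j, 1); (k, 1)];
      [:: (k - 1, 0); (7 * k - 2 * j, 1); (4 * k - j, 1); (k, 0); (k + j + 1, 1);
          (2 * j + 1, 1); (6 * k + j + 3, 0)];
      [:: (2 * k - 1, 0); (6 * k - j, 1); (2 * k, 1); (4 * k + j + 3, 0); (2 * j, 1);
          (3 * k + 2, 0); (6 * k + j + 3, 0)]].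

Definition D5_base := D5_starters ++ flatten [seq D5_family j | j <- iota 0 k].

Lemma D5_starters_diffs :
  base_diffs (7 * k + 4) (Darcs 5) D5_starters =
  [:: (0, 1, 4 * k + 1); (0, 0, 6 * k + 3); (1, 0, k); (1, 0, k + 2); (0, 0, 4 * k + 1);
      (0, 1, 7 * k + 3); (1, 1, 6 * k + 2); (1, 0, k + 1); (1, 1, 4 * k + 1);
      (0, 1, 5 * k + 2); (0, 1, 0); (1, 1, 6 * k + 3); (1, 0, 6 * k + 3); (0, 0, 5 * k + 2)].
Proof. by diff_table. Qed.

Lemma D5_family_diffs j : j < k ->
  base_diffs (7 * k + 4) (Darcs 5) (D5_family j) =
  [:: (0, 0, 1 + j); (1, 0, 6 * k + 4 + j); (1, 1, 4 * k + 2 + 2 * (k.-1 - j));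
      (1, 0, 0 + (k.-1 - j)); (0, 1, k + 1 + j); (1, 0, 4 * k + 3 + j);
      (0, 0, 5 * k + 3 + (k.-1 - j)); (1, 1, k + 1 + (k.-1 - j));
      (0, 1, 5 * k + 3 + (k.-1 - j)); (0, 0, 4 * k + 2 + (k.-1 - j));
      (0, 0, 6 * k + 4 + (k.-1 - j)); (0, 1, 6 * k + 3 + j); (1, 1, 1 + (k.-1 - j));
      (1, 1, 4 * k + 3 + 2 * (k.-1 - j)); (1, 0, k + 3 + 2 * j);
      (1, 1, 2 * k + 1 + (k.-1 - j)); (0, 1, 2 * k + 1 + (k.-1 - j)); (0, 1, 1 + j);
      (1, 1, 6 * k + 4 + j); (1, 0, 5 * k + 3 + (k.-1 - j)); (0, 0, k + 1 + (k.-1 - j));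
      (1, 0, 3 * k + 3 + j); (1, 1, 3 * k + 1 + (k.-1 - j));
      (0, 1, 4 * k + 2 + (k.-1 - j)); (0, 1, 3 * k + 1 + j);
      (1, 0, k + 4 + 2 * (k.-1 - j)); (0, 0, 3 * k + 1 + j); (0, 0, 2 * k + 1 + (k.-1 - j))].
Proof. by move=> ?; diff_table. Qed.

Lemma D5_base_ok : blocks_ok (7 * k + 4) D5_base.
Proof.
by apply: blocks_ok_families => [|j ?]; blocks_ok_by_lia.
Qed.

Lemma D5_mixed_diff_family : mixed_diff_family (7 * k + 4) (Darcs 5) D5_base.
Proof.
expand_diff_counts D5_base D5_starters_diffs D5_family_diffs.
- tile 1
    [:: (1, k); (k + 1, k); (2 * k + 1, k); (3 * k + 1, k); (4 * k + 1, 1); (4 * k + 2, k);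
        (5 * k + 2, 1); (5 * k + 3, k); (6 * k + 3, 1); (6 * k + 4, k)].
- tile 0
    [:: (0, 1); (1, k); (k + 1, k); (2 * k + 1, k); (3 * k + 1, k); (4 * k + 1, 1);
        (4 * k + 2, k); (5 * k + 2, 1); (5 * k + 3, k); (6 * k + 3, k); (7 * k + 3, 1)].
- tile 0
    [:: (0, k); (k, 1); (k + 1, 1); (k + 2, 1); (k + 3, 2 * k); (3 * k + 3, k);
        (4 * k + 3, k); (5 * k + 3, k); (6 * k + 3, 1); (6 * k + 4, k)]
    merging [:: (k + 3, k + 4)].
- tile 1
    [:: (1, k); (k + 1, k); (2 * k + 1, k); (3 * k + 1, k); (4 * k + 1, 1);
        (4 * k + 2, 2 * k); (6 * k + 2, 1); (6 * k + 3, 1); (6 * k + 4, k)]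
    merging [:: (4 * k + 2, 4 * k + 3)].
Qed.

End D5.

Definition D5_base_v8 : seq (seq (nat * nat)) :=
  [:: [:: (0, 0); (1, 0); (3, 0); (2, 0); (0, 1); (1, 1); (3, 1)];
      [:: (0, 0); (1, 1); (2, 1); (2, 0); (3, 1); (1, 0); (0, 1)]].

Lemma D5_decomposition v : v = 8 %[mod 14] -> has_decomposition (Darcs 5) v.
Proof.
apply: (decomposition_of_mixed_diff_families (small := D5_base_v8) _
  D5_base_ok D5_mixed_diff_family) => //.
exact: mixed_diff_family_of_check.
Qed.

Section D6.

Variable k : nat.
Hypothesis k_gt0 : 0 < k.

Definition D6_starters : seq (seq (nat * nat)) :=
  [:: [:: (4 * k + 3, 1); (3 * k + 2, 1); (1, 0); (k + 1, 1); (0, 1); (2 * k + 2, 0);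
          (5 * k + 4, 0)];
      [:: (k, 0); (6 * k + 3, 0); (2 * k + 1, 1); (3 * k + 2, 0); (2 * k + 1, 0);
          (3 * k + 2, 1); (0, 1)]].

Definition D6_family (j : nat) : seq (seq (nat * nat)) :=
  [:: [:: (4 * k + j + 2, 0); (4 * k + 2, 1); (k - j, 1); (3 * k + j + 2, 0); (2 * k, 0);
          (j, 0); (2 * k + 2 * j + 1, 1)];
      [:: (3 * k + 1 - j, 1); (2 * k + 1, 1); (4 * k + j + 3, 1); (k - j, 0); (0, 0);
          (3 * k + 1 - j, 0); (k, 1)];
      [:: (0, 1); (j + 1, 0); (2 * k + 2 * j + 3, 1); (k + 3 * j + 3, 1); (2 * j + 1, 1);
          (4 * k + 3, 0); (5 * k + 2 - j, 1)];
      [:: (2 * k + j + 2, 0); (2 * k + 1, 0); (2 * k + j + 2, 1); (2 * j + 1, 0);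
          (5 * k + 2, 1); (3 * k + j + 2, 0); (0, 0)]].

Definition D6_base := D6_starters ++ flatten [seq D6_family j | j <- iota 0 k].

Lemma D6_starters_diffs :
  base_diffs (7 * k + 4) (Darcs 6) D6_starters =
  [:: (1, 1, k + 1); (0, 1, 3 * k + 1); (0, 1, k); (1, 1, 6 * k + 3); (0, 1, 5 * k + 2);
      (0, 0, 3 * k + 2); (0, 1, 6 * k + 3); (0, 0, 2 * k + 1); (1, 0, 4 * k + 2);
      (1, 0, k + 1); (0, 0, 6 * k + 3); (1, 0, 6 * k + 3); (1, 1, 4 * k + 2); (1, 0, k)].
Proof. by diff_table. Qed.

Lemma D6_family_diffs j : j < k ->
  base_diffs (7 * k + 4) (Darcs 6) (D6_family j) =
  [:: (1, 0, 0 + j); (1, 1, 3 * k + 2 + j); (1, 0, 2 * k + 2 + 2 * j);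
      (0, 0, 5 * k + 3 + (k.-1 - j)); (0, 0, k + 1 + (k.-1 - j)); (0, 1, 2 * k + 1 + j);
      (1, 0, k + 2 + (k.-1 - j)); (1, 1, 1 + (k.-1 - j)); (1, 1, 4 * k + 3 + (k.-1 - j));
      (1, 0, 2 * k + 3 + 2 * (k.-1 - j)); (0, 0, 6 * k + 4 + j); (0, 0, 4 * k + 3 + j);
      (0, 1, 5 * k + 3 + j); (1, 1, k + 2 + (k.-1 - j)); (0, 1, 6 * k + 4 + (k.-1 - j));
      (1, 0, 4 * k + 3 + (k.-1 - j)); (1, 1, 6 * k + 4 + j);
      (1, 1, 5 * k + 3 + (k.-1 - j)); (0, 1, 3 * k + 2 + 2 * j); (0, 1, 0 + (k.-1 - j));
      (1, 1, 2 * k + 2 + j); (0, 0, 1 + j); (1, 0, 6 * k + 4 + (k.-1 - j));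
      (1, 0, 5 * k + 3 + j); (0, 1, 3 * k + 3 + 2 * (k.-1 - j));
      (0, 1, k + 1 + (k.-1 - j)); (0, 0, 3 * k + 3 + (k.-1 - j)); (0, 0, 2 * k + 2 + j)].
Proof. by move=> ?; diff_table. Qed.

Lemma D6_base_ok : blocks_ok (7 * k + 4) D6_base.
Proof.
by apply: blocks_ok_families => [|j ?]; blocks_ok_by_lia.
Qed.

Lemma D6_mixed_diff_family : mixed_diff_family (7 * k + 4) (Darcs 6) D6_base.
Proof.
expand_diff_counts D6_base D6_starters_diffs D6_family_diffs.
- tile 1
    [:: (1, k); (k + 1, k); (2 * k + 1, 1); (2 * k + 2, k); (3 * k + 2, 1); (3 * k + 3, k);
        (4 * k + 3, k); (5 * k + 3, k); (6 * k + 3, 1); (6 * k + 4, k)].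
- tile 0
    [:: (0, k); (k, 1); (k + 1, k); (2 * k + 1, k); (3 * k + 1, 1); (3 * k + 2, 2 * k);
        (5 * k + 2, 1); (5 * k + 3, k); (6 * k + 3, 1); (6 * k + 4, k)]
    merging [:: (3 * k + 2, 3 * k + 3)].
- tile 0
    [:: (0, k); (k, 1); (k + 1, 1); (k + 2, k); (2 * k + 2, 2 * k); (4 * k + 2, 1);
        (4 * k + 3, k); (5 * k + 3, k); (6 * k + 3, 1); (6 * k + 4, k)]
    merging [:: (2 * k + 2, 2 * k + 3)].
- tile 1
    [:: (1, k); (k + 1, 1); (k + 2, k); (2 * k + 2, k); (3 * k + 2, k); (4 * k + 2, 1);
        (4 * k + 3, k); (5 * k + 3, k); (6 * k + 3, 1); (6 * k + 4, k)].
Qed.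

End D6.

Definition D6_base_v8 : seq (seq (nat * nat)) :=
  [:: [:: (0, 0); (1, 0); (3, 0); (0, 1); (2, 0); (2, 1); (1, 1)];
      [:: (0, 1); (0, 0); (3, 0); (2, 1); (3, 1); (1, 1); (2, 0)]].

Lemma D6_decomposition v : v = 8 %[mod 14] -> has_decomposition (Darcs 6) v.
Proof.
apply: (decomposition_of_mixed_diff_families (small := D6_base_v8) _
  D6_base_ok D6_mixed_diff_family) => //.
exact: mixed_diff_family_of_check.
Qed.

Section D7.

Variable k : nat.
Hypothesis k_gt0 : 0 < k.

Definition D7_starters : seq (seq (nat * nat)) :=
  [:: [:: (k, 0); (2 * k + 1, 0); (6 * k + 3, 0); (2 * k + 2, 1); (5 * k + 2, 0); (0, 1);
          (k + 1, 1)];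
      [:: (0, 1); (0, 0); (1, 0); (2 * k + 3, 1); (k + 1, 1); (k + 2, 1); (6 * k + 3, 0)]].

Definition D7_family (j : nat) : seq (seq (nat * nat)) :=
  [:: [:: (2 * k + j + 1, 0); (4 * k + 2 * j + 4, 1); (0, 1); (2 * k - j, 0);
          (2 * k - 2 * j - 1, 1); (7 * k + 2 - j, 0); (3 * k + 2, 1)];
      [:: (7 * k + 1, 1); (3 * k - j - 3, 0); (5 * k + 1, 1); (j, 1); (3 * k + 1 - j, 1);
          (2 * k + 1, 1); (2 * k - j - 1, 1)];
      [:: (3 * k + 2 * j + 2, 0); (k, 0); (j, 0); (0, 1); (3 * k - j - 1, 0);
          (6 * k + 3, 1); (2 * k + j + 2, 1)];
      [:: (5 * k + 2, 0); (3 * k + j + 1, 0); (3 * k + 2 * j + 3, 0); (k, 0);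
          (7 * k + 2 - j, 0); (k, 1); (j, 0)]].

Definition D7_base := D7_starters ++ flatten [seq D7_family j | j <- iota 0 k].

Lemma D7_starters_diffs :
  base_diffs (7 * k + 4) (Darcs 7) D7_starters =
  [:: (0, 0, 6 * k + 3); (0, 0, 4 * k + 2); (1, 0, 4 * k + 1); (1, 0, 3 * k);
      (0, 1, 2 * k + 2); (1, 1, 6 * k + 3); (1, 0, 7 * k + 3); (0, 1, 0); (0, 0, 1);
      (1, 0, 5 * k + 2); (1, 1, 6 * k + 2); (1, 1, 1); (0, 1, 2 * k + 3); (0, 1, k + 1)].
Proof. by diff_table. Qed.

Lemma D7_family_diffs j : j < k ->
  base_diffs (7 * k + 4) (Darcs 7) (D7_family j) =
  [:: (1, 0, 4 * k + 2 + (k.-1 - j)); (1, 1, k + 2 + 2 * (k.-1 - j));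
      (0, 1, 5 * k + 4 + j); (0, 1, 6 * k + 4 + (k.-1 - j)); (1, 0, 5 * k + 3 + j);
      (1, 0, 3 * k + 1 + (k.-1 - j)); (1, 0, 6 * k + 3 + j); (0, 1, 4 * k + 4 + j);
      (0, 1, 2 * k + 4 + j); (1, 1, 4 * k + 2 + (k.-1 - j));
      (1, 1, k + 3 + 2 * (k.-1 - j)); (1, 1, 6 * k + 4 + j); (1, 1, 2 + j);
      (1, 1, 5 * k + 2 + j); (0, 0, 2 * k + 2 + 2 * j); (0, 0, 6 * k + 4 + j);
      (1, 0, 0 + j); (1, 0, 2 * k + (k.-1 - j)); (0, 1, 3 * k + 4 + j);
      (1, 1, 3 * k + 2 + (k.-1 - j)); (1, 0, k + j); (0, 0, k + 2 + (k.-1 - j));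
      (0, 0, 2 + j); (0, 0, 2 * k + 3 + 2 * j); (0, 0, 5 * k + 3 + (k.-1 - j));
      (0, 1, k + 2 + j); (0, 1, 1 + (k.-1 - j)); (0, 0, 4 * k + 3 + (k.-1 - j))].
Proof. by move=> ?; diff_table. Qed.

Lemma D7_base_ok : blocks_ok (7 * k + 4) D7_base.
Proof.
by apply: blocks_ok_families => [|j ?]; blocks_ok_by_lia.
Qed.

Lemma D7_mixed_diff_family : mixed_diff_family (7 * k + 4) (Darcs 7) D7_base.
Proof.
expand_diff_counts D7_base D7_starters_diffs D7_family_diffs.
- tile 1
    [:: (1, 1); (2, k); (k + 2, k); (2 * k + 2, 2 * k); (4 * k + 2, 1); (4 * k + 3, k);
        (5 * k + 3, k); (6 * k + 3, 1); (6 * k + 4, k)]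
    merging [:: (2 * k + 2, 2 * k + 3)].
- tile 0
    [:: (0, 1); (1, k); (k + 1, 1); (k + 2, k); (2 * k + 2, 1); (2 * k + 3, 1);
        (2 * k + 4, k); (3 * k + 4, k); (4 * k + 4, k); (5 * k + 4, k); (6 * k + 4, k)].
- tile 0
    [:: (0, k); (k, k); (2 * k, k); (3 * k, 1); (3 * k + 1, k); (4 * k + 1, 1);
        (4 * k + 2, k); (5 * k + 2, 1); (5 * k + 3, k); (6 * k + 3, k); (7 * k + 3, 1)].
- tile 1
    [:: (1, 1); (2, k); (k + 2, 2 * k); (3 * k + 2, k); (4 * k + 2, k); (5 * k + 2, k);
        (6 * k + 2, 1); (6 * k + 3, 1); (6 * k + 4, k)]
    merging [:: (k + 2, k + 3)].
Qed.

End D7.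

Definition D7_base_v8 : seq (seq (nat * nat)) :=
  [:: [:: (0, 0); (1, 0); (2, 0); (0, 1); (3, 0); (1, 1); (3, 1)];
      [:: (0, 0); (2, 0); (1, 1); (1, 0); (2, 1); (3, 1); (0, 1)]].

Lemma D7_decomposition v : v = 8 %[mod 14] -> has_decomposition (Darcs 7) v.
Proof.
apply: (decomposition_of_mixed_diff_families (small := D7_base_v8) _
  D7_base_ok D7_mixed_diff_family) => //.
exact: mixed_diff_family_of_check.
Qed.

Section D8.

Variable k : nat.
Hypothesis k_gt0 : 0 < k.

Definition D8_starters : seq (seq (nat * nat)) :=
  [:: [:: (0, 1); (5 * k + 3, 1); (4 * k + 2, 0); (k + 1, 1); (k + 1, 0); (0, 0);
          (k + 2, 1)];
      [:: (3 * k + 2, 0); (k + 1, 1); (2 * k + 2, 1); (1, 0); (2 * k + 3, 1);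
          (4 * k + 3, 0); (0, 0)]].

Definition D8_family (j : nat) : seq (seq (nat * nat)) :=
  [:: [:: (2 * k - j - 1, 1); (2 * k, 0); (4 * k + 1 - j, 0); (5 * k + 4, 1);
          (2 * k + j + 2, 0); (0, 0); (3 * k + j + 3, 1)];
      [:: (3 * k, 1); (6 * k + 1 - 2 * j, 1); (5 * k + 1 - j, 1); (4 * k + 1, 1); (j, 1);
          (k - 1, 0); (k + j, 1)];
      [:: (j, 0); (6 * k + 3, 0); (j, 1); (3 * k + 1, 0); (2 * k + 1 - j, 1);
          (4 * k + 3, 1); (2 * j + 1, 0)];
      [:: (5 * k + 2 * j + 4, 1); (j, 0); (4 * k + 1 - j, 1); (4 * k - 2 * j, 0);
          (3 * k - j, 0); (5 * k + 1, 0); (k + j, 0)]].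

Definition D8_base := D8_starters ++ flatten [seq D8_family j | j <- iota 0 k].

Lemma D8_starters_diffs :
  base_diffs (7 * k + 4) (Darcs 8) D8_starters =
  [:: (1, 1, 2 * k + 1); (0, 1, k + 1); (0, 1, 4 * k + 3); (0, 1, 0); (0, 0, 6 * k + 3);
      (0, 1, k + 2); (1, 1, 6 * k + 2); (1, 0, 2 * k + 1); (1, 1, 6 * k + 3);
      (1, 0, 5 * k + 3); (1, 0, 5 * k + 2); (1, 0, 2 * k); (0, 0, 3 * k + 1);
      (0, 0, 3 * k + 2)].
Proof. by diff_table. Qed.

Lemma D8_family_diffs j : j < k ->
  base_diffs (7 * k + 4) (Darcs 8) (D8_family j) =
  [:: (0, 1, 6 * k + 4 + (k.-1 - j)); (0, 0, 5 * k + 3 + j); (0, 1, k + 3 + j);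
      (0, 1, 2 * k + 3 + (k.-1 - j)); (0, 0, 4 * k + 3 + (k.-1 - j));
      (0, 1, 3 * k + 3 + j); (1, 1, 4 * k + 2 + 2 * (k.-1 - j)); (1, 1, 4 * k + 3 + 2 * j);
      (1, 1, 1 + (k.-1 - j)); (1, 1, 6 * k + 4 + j); (1, 1, 3 * k + 2 + (k.-1 - j));
      (1, 0, 0 + (k.-1 - j)); (0, 1, 1 + j); (1, 1, k + 1 + (k.-1 - j)); (0, 0, k + 1 + j);
      (1, 0, 5 * k + 4 + (k.-1 - j)); (1, 0, 2 * k + 2 + (k.-1 - j)); (1, 0, k + j);
      (1, 1, 2 * k + 2 + j); (1, 0, 3 * k + 2 + 2 * j); (0, 0, 6 * k + 4 + (k.-1 - j));
      (0, 1, 5 * k + 4 + j); (1, 0, 3 * k + 3 + 2 * j); (1, 0, 6 * k + 4 + (k.-1 - j));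
      (0, 0, 1 + (k.-1 - j)); (0, 0, 2 * k + 1 + j); (0, 0, 3 * k + 3 + j);
      (0, 1, 4 * k + 4 + j)].
Proof. by move=> ?; diff_table. Qed.

Lemma D8_base_ok : blocks_ok (7 * k + 4) D8_base.
Proof.
by apply: blocks_ok_families => [|j ?]; blocks_ok_by_lia.
Qed.

Lemma D8_mixed_diff_family : mixed_diff_family (7 * k + 4) (Darcs 8) D8_base.
Proof.
expand_diff_counts D8_base D8_starters_diffs D8_family_diffs.
- tile 1
    [:: (1, k); (k + 1, k); (2 * k + 1, k); (3 * k + 1, 1); (3 * k + 2, 1); (3 * k + 3, k);
        (4 * k + 3, k); (5 * k + 3, k); (6 * k + 3, 1); (6 * k + 4, k)].
- tile 0
    [:: (0, 1); (1, k); (k + 1, 1); (k + 2, 1); (k + 3, k); (2 * k + 3, k); (3 * k + 3, k);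
        (4 * k + 3, 1); (4 * k + 4, k); (5 * k + 4, k); (6 * k + 4, k)].
- tile 0
    [:: (0, k); (k, k); (2 * k, 1); (2 * k + 1, 1); (2 * k + 2, k); (3 * k + 2, 2 * k);
        (5 * k + 2, 1); (5 * k + 3, 1); (5 * k + 4, k); (6 * k + 4, k)]
    merging [:: (3 * k + 2, 3 * k + 3)].
- tile 1
    [:: (1, k); (k + 1, k); (2 * k + 1, 1); (2 * k + 2, k); (3 * k + 2, k);
        (4 * k + 2, 2 * k); (6 * k + 2, 1); (6 * k + 3, 1); (6 * k + 4, k)]
    merging [:: (4 * k + 2, 4 * k + 3)].
Qed.

End D8.

Definition D8_base_v8 : seq (seq (nat * nat)) :=
  [:: [:: (0, 0); (1, 0); (3, 0); (0, 1); (2, 0); (1, 1); (2, 1)];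
      [:: (0, 0); (3, 0); (3, 1); (2, 1); (0, 1); (1, 0); (1, 1)]].

Lemma D8_decomposition v : v = 8 %[mod 14] -> has_decomposition (Darcs 8) v.
Proof.
apply: (decomposition_of_mixed_diff_families (small := D8_base_v8) _
  D8_base_ok D8_mixed_diff_family) => //.
exact: mixed_diff_family_of_check.
Qed.

Theorem lemma3p6 (i : nat) (hi : 1 <= i <= 8) (v : nat) (hv : 0 < v)
  (hmod : v = 8 %[mod 14]) :
  has_decomposition (Darcs i) v.
Proof.
move: hmod; case: i hi => [|[|[|[|[|[|[|[|[|i]]]]]]]]] // _.
- exact: D1_decomposition.
- exact: D2_decomposition.
- exact: D3_decomposition.
- exact: D4_decomposition.
- exact: D5_decomposition.
- exact: D6_decomposition.
- exact: D7_decomposition.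
- exact: D8_decomposition.
Qed.
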